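(* Let $d\ge3$, $\chi^0=c_0(-\mu)^{1-d/2}$ with $c_0\neq0$, and let $\xi^a$ be a timelike vector field with $\nabla_aT_0^{ab}=0$, where $T_0^{ab}=4\chi^0_{\mu\mu}\xi^a\xi^b+2\chi^0_\mu g^{ab}$. Then (i) $\dot\mu/\mu=2D/d$ and $\dot\xi^b=(\dot\mu/\mu)\xi^b-\tfrac12\nabla^b\mu$; (ii) the entropy current $S_0^a:=\partial\chi^0/\partial\xi_a-\xi_bT_0^{ab}=-4\mu\chi^0_{\mu\mu}\xi^a$ satisfies $\nabla_aS_0^a=0$; (iii) if $\nabla_{(a}\xi_{b)}=t\,g_{ab}+s\,\xi_a\xi_b$ for some functions $t,s$, then $s=0$ and $t=D/d$, i.e. $\xi^a$ is a conformal Killing vector field.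
   Context: $\mu:=\xi^c\xi_c$, $D:=\nabla_c\xi^c$, $\dot\mu:=\xi^a\nabla_a\mu$, $\dot\xi^b:=\xi^a\nabla_a\xi^b$; subscripts $\mu$ denote derivatives with respect to $\mu$. *)

(* local coordinate formalization on an open subset U of R^d. *)
From Stdlib Require Import Reals Lra Lia.
Open Scope R_scope.

(* A point of R^d in coordinates; only the coordinates 0..d-1 are relevant. *)
Definition pt := nat -> R.

Fixpoint sumd (n : nat) (f : nat -> R) : R :=
  match n with O => 0 | S k => sumd k f + f k end.

Definition kdelta (a b : nat) : R := if Nat.eqb a b then 1 else 0.

Definition upd (x : pt) (c : nat) (h : R) : pt :=
  fun i => if Nat.eqb i c then h else x i.

Definition has_pd (f : pt -> R) (c : nat) (x : pt) (l : R) : Prop :=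
  derivable_pt_lim (fun h => f (upd x c h)) (x c) l.

Definition open_set (d : nat) (U : pt -> Prop) : Prop :=
  forall x, U x -> exists eps, 0 < eps /\
    forall y, (forall i, (i < d)%nat -> Rabs (y i - x i) < eps) -> U y.

Definition lorentzian (d : nat) (gx : nat -> nat -> R) : Prop :=
  exists e : nat -> nat -> R,
    forall i j, (i < d)%nat -> (j < d)%nat ->
      sumd d (fun a => sumd d (fun b => gx a b * e i a * e j b)) =
      (if Nat.eqb i j then (if Nat.eqb i 0 then -1 else 1) else 0).

(* g : metric g_ab, ginv : inverse metric g^ab, dg x c a b = partial_c g_ab *)
Definition spacetime (d : nat) (U : pt -> Prop) (g ginv : pt -> nat -> nat -> R)
    (dg : pt -> nat -> nat -> nat -> R) : Prop :=
  open_set d U /\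
  forall x, U x ->
    (forall a b, (a < d)%nat -> (b < d)%nat -> g x a b = g x b a) /\
    (forall a c, (a < d)%nat -> (c < d)%nat ->
        sumd d (fun b => g x a b * ginv x b c) = kdelta a c) /\
    lorentzian d (g x) /\
    (forall a b c, (a < d)%nat -> (b < d)%nat -> (c < d)%nat ->
        has_pd (fun y => g y a b) c x (dg x c a b)).

(* xi : components xi^a, dxi x c a = partial_c xi^a *)
Definition vector_field (d : nat) (U : pt -> Prop) (xi : pt -> nat -> R)
    (dxi : pt -> nat -> nat -> R) : Prop :=
  forall x, U x -> forall a c, (a < d)%nat -> (c < d)%nat ->
    has_pd (fun y => xi y a) c x (dxi x c a).

Definition Gam (d : nat) (ginv : pt -> nat -> nat -> R)
    (dg : pt -> nat -> nat -> nat -> R) (x : pt) (a b c : nat) : R :=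
  / 2 * sumd d (fun e => ginv x a e * (dg x b e c + dg x c e b - dg x e b c)).

Definition cov_xi (d : nat) (ginv : pt -> nat -> nat -> R) (dg : pt -> nat -> nat -> nat -> R) (xi : pt -> nat -> R) (dxi : pt -> nat -> nat -> R)
    (x : pt) (a b : nat) : R :=
  dxi x a b + sumd d (fun c => Gam d ginv dg x b a c * xi x c).

Definition xi_low (d : nat) (g : pt -> nat -> nat -> R) (xi : pt -> nat -> R) (x : pt) (a : nat) : R :=
  sumd d (fun b => g x a b * xi x b).

Definition cov_xi_low (d : nat) (g ginv : pt -> nat -> nat -> R) (dg : pt -> nat -> nat -> nat -> R)
    (xi : pt -> nat -> R) (dxi : pt -> nat -> nat -> R) (x : pt) (a b : nat) : R :=
  sumd d (fun c => g x b c * cov_xi d ginv dg xi dxi x a c).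

Definition mu (d : nat) (g : pt -> nat -> nat -> R) (xi : pt -> nat -> R) (x : pt) : R := sumd d (fun a => xi_low d g xi x a * xi x a).

Definition Dv (d : nat) (ginv : pt -> nat -> nat -> R) (dg : pt -> nat -> nat -> nat -> R)
    (xi : pt -> nat -> R) (dxi : pt -> nat -> nat -> R) (x : pt) : R := sumd d (fun a => cov_xi d ginv dg xi dxi x a a).

Definition xidot (d : nat) (ginv : pt -> nat -> nat -> R) (dg : pt -> nat -> nat -> nat -> R)
    (xi : pt -> nat -> R) (dxi : pt -> nat -> nat -> R) (x : pt) (b : nat) : R :=
  sumd d (fun a => xi x a * cov_xi d ginv dg xi dxi x a b).

(* chi^0(mu) = c0 (-mu)^(1 - d/2), for mu < 0 *)
Definition chi0 (d : nat) (c0 : R) (m : R) : R := c0 * Rpower (- m) (1 - INR d / 2).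

(* T_0^{ab} = 4 chi_mumu xi^a xi^b + 2 chi_mu g^{ab};  chi1 = chi_mu, chi2 = chi_mumu *)
Definition T0 (d : nat) (g : pt -> nat -> nat -> R) (ginv : pt -> nat -> nat -> R) (xi : pt -> nat -> R) (chi1 chi2 : R -> R) (x : pt) (a b : nat) : R :=
  4 * chi2 (mu d g xi x) * xi x a * xi x b + 2 * chi1 (mu d g xi x) * ginv x a b.

(* S_0^a = dchi^0/dxi_a - xi_b T_0^{ab}, with dchi^0/dxi_a = chi_mu * dmu/dxi_a
   = 2 chi_mu xi^a  (mu = g^{ab} xi_a xi_b) *)
Definition S0 (d : nat) (g ginv : pt -> nat -> nat -> R) (xi : pt -> nat -> R) (chi1 chi2 : R -> R) (x : pt) (a : nat) : R :=
  2 * chi1 (mu d g xi x) * xi x a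
  - sumd d (fun b => xi_low d g xi x b * T0 d g ginv xi chi1 chi2 x a b).

(* nabla_a T^{ab}, given dT c a b = partial_c T^{ab} at x *)
Definition div2 (d : nat) (ginv : pt -> nat -> nat -> R) (dg : pt -> nat -> nat -> nat -> R) (T : pt -> nat -> nat -> R) (dT : nat -> nat -> nat -> R)
    (x : pt) (b : nat) : R :=
  sumd d (fun a => dT a a b +
    sumd d (fun c => Gam d ginv dg x a a c * T x c b + Gam d ginv dg x b a c * T x a c)).

(* nabla_a V^a, given dV c a = partial_c V^a at x *)
Definition div1 (d : nat) (ginv : pt -> nat -> nat -> R) (dg : pt -> nat -> nat -> nat -> R) (V : pt -> nat -> R) (dV : nat -> nat -> R) (x : pt) : R :=
  sumd d (fun a => dV a a + sumd d (fun c => Gam d ginv dg x a a c * V x c)).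

From Pilot Require Import Defs.
From Stdlib Require Import Reals Lra Lia FunctionalExtensionality.
Open Scope R_scope.

(* With p = 1 - d/2 one has chi_mumumu = (p - 2) chi_mumu / mu, and the metric is parallel,
   so nabla_a T_0^{ab} = 0 reads
     chi_mumu ((p - 2) (mudot / mu) xi^b + D xi^b + xidot^b + 1/2 nabla^b mu) = 0.
   Contracting with xi_b and using xi_b xidot^b = mudot / 2 gives (p - 1) mudot = - D mu,
   i.e. mudot / mu = 2 D / d, and then the formula for xidot.  Since S_0^a = -4 mu chi_mumu xi^a,
   nabla_a S_0^a = -4 chi_mumu ((p - 1) mudot + mu D) = 0.  Finally, contracting
   nabla_(a xi_b) = t g_ab + s xi_a xi_b with xi^a gives t + s mu = D / d and tracing it gives
   d t + s mu = D, whence t = D / d and s = 0 as mu <> 0.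
   Differentiability of g^{ab} is not assumed: it follows from that of T_0, because
   2 chi_mu g^{ab} = T_0^{ab} - 4 chi_mumu xi^a xi^b with chi_mu <> 0. *)

Lemma sumd_ext n f g : (forall i, (i < n)%nat -> f i = g i) -> sumd n f = sumd n g.
Proof.
  induction n as [|n IH]; simpl; intros H; auto.
  rewrite IH, H; auto.
Qed.

Lemma sumd_add n f g : sumd n (fun i => f i + g i) = sumd n f + sumd n g.
Proof. induction n; simpl; [ring | rewrite IHn; ring]. Qed.

Lemma sumd_sub n f g : sumd n (fun i => f i - g i) = sumd n f - sumd n g.
Proof. induction n; simpl; [ring | rewrite IHn; ring]. Qed.

Lemma sumd_opp n f : sumd n (fun i => - f i) = - sumd n f.
Proof. induction n; simpl; [ring | rewrite IHn; ring]. Qed.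

Lemma sumd_mull n c f : sumd n (fun i => c * f i) = c * sumd n f.
Proof. induction n; simpl; [ring | rewrite IHn; ring]. Qed.

Lemma sumd_mulr n c f : sumd n (fun i => f i * c) = sumd n f * c.
Proof. induction n; simpl; [ring | rewrite IHn; ring]. Qed.

Lemma sumd_0 n : sumd n (fun _ => 0) = 0.
Proof. induction n; simpl; [ring | rewrite IHn; ring]. Qed.

Lemma sumd_swap n m f :
  sumd n (fun i => sumd m (fun j => f i j)) = sumd m (fun j => sumd n (fun i => f i j)).
Proof.
  induction n; simpl; [symmetry; apply sumd_0 |].
  rewrite IHn, <- sumd_add; auto.
Qed.

Lemma sumd_swap_eq n m (f : nat -> nat -> R) (h : nat -> R) :
  (forall j, (j < m)%nat -> h j = sumd n (fun i => f i j)) ->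
  sumd n (fun i => sumd m (fun j => f i j)) = sumd m h.
Proof. intros E. rewrite sumd_swap. apply sumd_ext; intros j Hj. rewrite E; auto. Qed.

Lemma sumd_neq0 n f : sumd n f <> 0 -> exists i, (i < n)%nat /\ f i <> 0.
Proof.
  induction n as [|n IH]; simpl; intros H; [lra |].
  destruct (Req_dec (f n) 0) as [E | E].
  - destruct IH as [i [Hi Hf]]; [lra |]. exists i; split; auto.
  - exists n; auto.
Qed.

Lemma kdelta_sym a b : kdelta a b = kdelta b a.
Proof. unfold kdelta. rewrite Nat.eqb_sym. auto. Qed.

Lemma sumd_kdelta_l n a f : (a < n)%nat -> sumd n (fun i => kdelta a i * f i) = f a.
Proof.
  induction n as [|n IH]; intros H; simpl; [lia |].
  unfold kdelta at 2. destruct (Nat.eqb_spec a n) as [-> | E].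
  - rewrite (sumd_ext _ _ (fun _ => 0)), sumd_0; [ring |].
    intros i Hi. unfold kdelta. destruct (Nat.eqb_spec n i); [lia | ring].
  - rewrite IH by lia. ring.
Qed.

Lemma sumd_kdelta_r n a f : (a < n)%nat -> sumd n (fun i => f i * kdelta i a) = f a.
Proof.
  intros H. rewrite <- (sumd_kdelta_l n a f H).
  apply sumd_ext; intros. rewrite kdelta_sym; ring.
Qed.

Lemma sumd_kdelta_diag n : sumd n (fun i => kdelta i i) = INR n.
Proof.
  induction n; simpl; auto.
  rewrite IHn. unfold kdelta. rewrite Nat.eqb_refl. destruct n; simpl; ring.
Qed.

Lemma upd_same x c : upd x c (x c) = x.
Proof.
  apply functional_extensionality; intro i; unfold upd.
  destruct (Nat.eqb_spec i c); subst; auto.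
Qed.

Lemma derivable_pt_lim_local f f' x0 l eps : 0 < eps ->
  (forall y, Rabs (y - x0) < eps -> f y = f' y) ->
  derivable_pt_lim f' x0 l -> derivable_pt_lim f x0 l.
Proof.
  intros He Heq H e He'. destruct (H e He') as [del Hd].
  assert (Hp : 0 < Rmin del eps) by (apply Rmin_pos; [apply cond_pos | auto]).
  exists (mkposreal _ Hp). intros h Hh Hl. simpl in Hl.
  rewrite (Heq (x0 + h)), (Heq x0).
  - apply Hd; auto. apply Rlt_le_trans with (1 := Hl); apply Rmin_l.
  - rewrite Rminus_diag, Rabs_R0; auto.
  - replace (x0 + h - x0) with h by ring. apply Rlt_le_trans with (1 := Hl); apply Rmin_r.
Qed.

Lemma has_pd_local f f' c x l eps : 0 < eps ->
  (forall h, Rabs (h - x c) < eps -> f (upd x c h) = f' (upd x c h)) ->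
  has_pd f' c x l -> has_pd f c x l.
Proof. apply derivable_pt_lim_local. Qed.

Lemma has_pd_unique f c x l1 l2 : has_pd f c x l1 -> has_pd f c x l2 -> l1 = l2.
Proof. apply uniqueness_limite. Qed.

Lemma has_pd_eq f c x l l' : has_pd f c x l -> l = l' -> has_pd f c x l'.
Proof. intros H ->; auto. Qed.

Lemma has_pd_const c x r : has_pd (fun _ => r) c x 0.
Proof. apply derivable_pt_lim_const. Qed.

Lemma has_pd_plus f g c x l1 l2 : has_pd f c x l1 -> has_pd g c x l2 ->
  has_pd (fun y => f y + g y) c x (l1 + l2).
Proof. apply (derivable_pt_lim_plus (fun h => f (upd x c h)) (fun h => g (upd x c h))). Qed.

Lemma has_pd_minus f g c x l1 l2 : has_pd f c x l1 -> has_pd g c x l2 ->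
  has_pd (fun y => f y - g y) c x (l1 - l2).
Proof. apply (derivable_pt_lim_minus (fun h => f (upd x c h)) (fun h => g (upd x c h))). Qed.

Lemma has_pd_mult f g c x l1 l2 : has_pd f c x l1 -> has_pd g c x l2 ->
  has_pd (fun y => f y * g y) c x (l1 * g x + f x * l2).
Proof.
  intros H1 H2.
  pose proof (derivable_pt_lim_mult (fun h => f (upd x c h)) (fun h => g (upd x c h)) _ _ _ H1 H2) as H.
  cbv beta in H. rewrite upd_same in H. exact H.
Qed.

Lemma has_pd_div f g c x l1 l2 : has_pd f c x l1 -> has_pd g c x l2 -> g x <> 0 ->
  has_pd (fun y => f y / g y) c x ((l1 * g x - l2 * f x) / (g x)²).
Proof.
  intros H1 H2 Hg. rewrite <- (upd_same x c) in Hg.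
  pose proof (derivable_pt_lim_div (fun h => f (upd x c h)) (fun h => g (upd x c h)) _ _ _ H1 H2 Hg)
    as H.
  cbv beta in H. rewrite upd_same in H. exact H.
Qed.

Lemma has_pd_comp phi f c x l l' : has_pd f c x l -> derivable_pt_lim phi (f x) l' ->
  has_pd (fun y => phi (f y)) c x (l' * l).
Proof.
  intros H1 H2. rewrite <- (upd_same x c) in H2.
  exact (derivable_pt_lim_comp (fun h => f (upd x c h)) phi _ _ _ H1 H2).
Qed.

Lemma has_pd_sumd n f l c x : (forall i, (i < n)%nat -> has_pd (fun y => f y i) c x (l i)) ->
  has_pd (fun y => sumd n (fun i => f y i)) c x (sumd n l).
Proof.
  induction n; simpl; intros H; [apply has_pd_const |].
  apply has_pd_plus; [apply IHn; intros |]; apply H; lia.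
Qed.

Lemma open_set_upd d U x c : Defs.open_set d U -> U x ->
  exists eps, 0 < eps /\ forall h, Rabs (h - x c) < eps -> U (upd x c h).
Proof.
  intros HU Hx. destruct (HU x Hx) as [eps [He H]]. exists eps; split; auto.
  intros h Hh. apply H. intros i Hi. unfold upd.
  destruct (Nat.eqb_spec i c); subst; auto. rewrite Rminus_diag, Rabs_R0; auto.
Qed.

Lemma derivable_pt_lim_Rpower_opp k q m : m < 0 ->
  derivable_pt_lim (fun m => k * Rpower (- m) q) m (- k * q * Rpower (- m) (q - 1)).
Proof.
  intros Hm.
  assert (Hopp : derivable_pt_lim (fun m => - m) m (-1)).
  { apply (derivable_pt_lim_opp id), derivable_pt_lim_id. }
  pose proof (derivable_pt_lim_comp _ _ _ _ _ Hopp (derivable_pt_lim_power (- m) q ltac:(lra))) as H.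
  replace (- k * q * Rpower (- m) (q - 1)) with (k * (q * Rpower (- m) (q - 1) * -1)) by ring.
  apply derivable_pt_lim_scal, H.
Qed.

Lemma derivable_pt_lim_neg f f' m l : m < 0 -> (forall y, y < 0 -> f y = f' y) ->
  derivable_pt_lim f' m l -> derivable_pt_lim f m l.
Proof.
  intros Hm Heq. apply derivable_pt_lim_local with (eps := - m); [lra |].
  intros y Hy. apply Heq. apply Rabs_def2 in Hy. lra.
Qed.

Definition chi0_exp (d : nat) : R := 1 - INR d / 2.

Section Chi0.

Variables (d : nat) (c0 : R) (chi1 chi2 : R -> R).
Hypothesis chi1_deriv : forall m, m < 0 -> derivable_pt_lim (chi0 d c0) m (chi1 m).
Hypothesis chi2_deriv : forall m, m < 0 -> derivable_pt_lim chi1 m (chi2 m).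

Local Notation p := (chi0_exp d).

Lemma chi1_eq m : m < 0 -> chi1 m = - c0 * p * Rpower (- m) (p - 1).
Proof.
  intros Hm. apply (uniqueness_limite (chi0 d c0) m); auto.
  apply derivable_pt_lim_Rpower_opp; auto.
Qed.

Lemma chi2_eq m : m < 0 -> chi2 m = c0 * p * (p - 1) * Rpower (- m) (p - 2).
Proof.
  intros Hm. apply (uniqueness_limite chi1 m); auto.
  eapply derivable_pt_lim_neg; [exact Hm | exact chi1_eq |].
  replace (p - 2) with (p - 1 - 1) by ring.
  replace (c0 * p * (p - 1)) with (- (- c0 * p) * (p - 1)) by ring.
  apply derivable_pt_lim_Rpower_opp; auto.
Qed.

Lemma derivable_chi2 m : m < 0 -> derivable_pt_lim chi2 m (chi2 m * (p - 2) / m).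
Proof.
  intros Hm. eapply derivable_pt_lim_neg; [exact Hm | exact chi2_eq |].
  assert (E : Rpower (- m) (p - 2) = Rpower (- m) (p - 2 - 1) * (- m)).
  { rewrite <- (Rpower_1 (- m)) at 3 by lra. rewrite <- Rpower_plus. f_equal; ring. }
  rewrite chi2_eq, E by auto.
  replace (c0 * p * (p - 1) * (Rpower (- m) (p - 2 - 1) * - m) * (p - 2) / m)
    with (- (c0 * p * (p - 1)) * (p - 2) * Rpower (- m) (p - 2 - 1)) by (field; lra).
  apply derivable_pt_lim_Rpower_opp; auto.
Qed.

Hypothesis d_ge3 : (3 <= d)%nat.
Hypothesis c0_neq0 : c0 <> 0.

Lemma chi0_exp_neg : p < 0.
Proof. unfold chi0_exp. apply le_INR in d_ge3. simpl in d_ge3. lra. Qed.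

Lemma chi1_neq0 m : m < 0 -> chi1 m <> 0.
Proof.
  intros Hm. rewrite chi1_eq by auto. pose proof chi0_exp_neg.
  pose proof (exp_pos (( p - 1) * ln (- m))).
  unfold Rpower. repeat apply Rmult_integral_contrapositive_currified; lra.
Qed.

Lemma chi2_neq0 m : m < 0 -> chi2 m <> 0.
Proof.
  intros Hm. rewrite chi2_eq by auto. pose proof chi0_exp_neg.
  pose proof (exp_pos ((p - 2) * ln (- m))).
  unfold Rpower. repeat apply Rmult_integral_contrapositive_currified; lra.
Qed.

End Chi0.

Lemma sumd_mat_vec n (u : nat -> R) (B : nat -> nat -> R) (v : nat -> R) :
  sumd n (fun b => u b * sumd n (fun c => B b c * v c)) =
  sumd n (fun c => sumd n (fun b => u b * B b c) * v c).
Proof.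
  transitivity (sumd n (fun b => sumd n (fun c => u b * B b c * v c))).
  - apply sumd_ext; intros. rewrite <- sumd_mull. apply sumd_ext; intros. ring.
  - apply sumd_swap_eq; intros c Hc. rewrite <- sumd_mulr. auto.
Qed.

Section InverseMatrix.

Variables (n : nat) (G Gi : nat -> nat -> R).
Hypothesis G_sym : forall a b, (a < n)%nat -> (b < n)%nat -> G a b = G b a.
Hypothesis G_Gi : forall a c, (a < n)%nat -> (c < n)%nat ->
  sumd n (fun b => G a b * Gi b c) = kdelta a c.

Lemma G_Gi_contract v a : (a < n)%nat ->
  sumd n (fun b => G a b * sumd n (fun c => Gi b c * v c)) = v a.
Proof.
  intros Ha. rewrite sumd_mat_vec, <- (sumd_kdelta_l n a v Ha).
  apply sumd_ext; intros. rewrite G_Gi; auto.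
Qed.

Lemma Gi_sym a b : (a < n)%nat -> (b < n)%nat -> Gi a b = Gi b a.
Proof.
  intros Ha Hb.
  transitivity (sumd n (fun c => Gi c b * sumd n (fun e => G c e * Gi e a))).
  { rewrite <- (sumd_kdelta_r n a (fun c => Gi c b) Ha).
    apply sumd_ext; intros. rewrite G_Gi; auto. }
  rewrite sumd_mat_vec, <- (sumd_kdelta_l n b (fun e => Gi e a) Hb).
  apply sumd_ext; intros e He. rewrite kdelta_sym, <- G_Gi by auto.
  f_equal. apply sumd_ext; intros. rewrite G_sym by auto. ring.
Qed.

Lemma Gi_G a c : (a < n)%nat -> (c < n)%nat -> sumd n (fun b => Gi a b * G b c) = kdelta a c.
Proof.
  intros Ha Hc. rewrite kdelta_sym, <- G_Gi by auto.
  apply sumd_ext; intros. rewrite G_sym, Gi_sym by auto. ring.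
Qed.

Lemma Gi_G_contract v a : (a < n)%nat ->
  sumd n (fun b => Gi a b * sumd n (fun c => G b c * v c)) = v a.
Proof.
  intros Ha. rewrite sumd_mat_vec, <- (sumd_kdelta_l n a v Ha).
  apply sumd_ext; intros. rewrite Gi_G; auto.
Qed.

End InverseMatrix.

Section PointwiseCalculus.

Variables (d : nat) (g ginv : pt -> nat -> nat -> R) (dg : pt -> nat -> nat -> nat -> R)
  (xi : pt -> nat -> R) (dxi : pt -> nat -> nat -> R) (x : pt).

Hypothesis g_sym : forall a b, (a < d)%nat -> (b < d)%nat -> g x a b = g x b a.
Hypothesis g_ginv : forall a c, (a < d)%nat -> (c < d)%nat ->
  sumd d (fun b => g x a b * ginv x b c) = kdelta a c.
Hypothesis dg_sym : forall c a b, (c < d)%nat -> (a < d)%nat -> (b < d)%nat ->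
  dg x c a b = dg x c b a.

Local Notation M := (mu d g xi x).
Local Notation D := (Dv d ginv dg xi dxi x).
Local Notation xil := (xi_low d g xi x).
Local Notation cov := (cov_xi d ginv dg xi dxi x).
Local Notation covl := (cov_xi_low d g ginv dg xi dxi x).
Local Notation xdot := (xidot d ginv dg xi dxi x).

Lemma ginv_sym a b : (a < d)%nat -> (b < d)%nat -> ginv x a b = ginv x b a.
Proof. exact (Gi_sym d (g x) (ginv x) g_sym g_ginv a b). Qed.

Lemma xi_low_ginv c : (c < d)%nat -> sumd d (fun b => xil b * ginv x b c) = xi x c.
Proof.
  intros Hc. rewrite <- (Gi_G_contract d (g x) (ginv x) g_sym g_ginv (xi x) c Hc).
  apply sumd_ext; intros. rewrite ginv_sym by auto. unfold xi_low. ring.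
Qed.

Lemma Gam_lower b c a : (b < d)%nat ->
  sumd d (fun e => g x b e * Gam d ginv dg x e c a) = / 2 * (dg x c b a + dg x a b c - dg x b c a).
Proof.
  intros Hb. unfold Gam.
  rewrite <- (G_Gi_contract d (g x) (ginv x) g_ginv
                (fun f => dg x c f a + dg x a f c - dg x f c a) b Hb), <- sumd_mull.
  apply sumd_ext; intros. ring.
Qed.

Lemma xi_low_Gam c : (c < d)%nat ->
  sumd d (fun a => xil a * sumd d (fun e => Gam d ginv dg x a c e * xi x e)) =
  / 2 * sumd d (fun b => sumd d (fun e => xi x b * xi x e * dg x c b e)).
Proof.
  intros Hc. unfold xi_low.
  transitivity (sumd d (fun b => sumd d (fun e =>
    xi x b * xi x e * sumd d (fun a => g x b a * Gam d ginv dg x a c e)))).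
  - transitivity (sumd d (fun a => sumd d (fun b => sumd d (fun e =>
      g x a b * xi x b * (Gam d ginv dg x a c e * xi x e))))).
    { apply sumd_ext; intros. rewrite <- sumd_mulr. apply sumd_ext; intros. rewrite sumd_mull; auto. }
    apply sumd_swap_eq; intros b Hb. rewrite sumd_swap. apply sumd_ext; intros e He.
    rewrite <- sumd_mull. apply sumd_ext; intros. rewrite g_sym by auto. ring.
  - assert (Cancel : sumd d (fun b => sumd d (fun e => xi x b * xi x e * dg x e b c)) =
                     sumd d (fun b => sumd d (fun e => xi x b * xi x e * dg x b c e))).
    { apply sumd_swap_eq; intros. apply sumd_ext; intros. rewrite dg_sym by auto. ring. }
    transitivity (/ 2 * (sumd d (fun b => sumd d (fun e => xi x b * xi x e * dg x c b e))
      + sumd d (fun b => sumd d (fun e => xi x b * xi x e * dg x e b c))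
      - sumd d (fun b => sumd d (fun e => xi x b * xi x e * dg x b c e)))).
    + rewrite <- sumd_add, <- sumd_sub, <- sumd_mull. apply sumd_ext; intros b Hb.
      rewrite <- sumd_add, <- sumd_sub, <- sumd_mull. apply sumd_ext; intros.
      rewrite Gam_lower by auto. ring.
    + rewrite Cancel. ring.
Qed.

Definition dmu (c : nat) : R :=
  sumd d (fun a => sumd d (fun b => dg x c a b * xi x b + g x a b * dxi x c b) * xi x a
    + xil a * dxi x c a).

Local Notation mudot := (sumd d (fun a => xi x a * dmu a)).
Local Notation grad_mu b := (sumd d (fun c => ginv x b c * dmu c)).

Lemma dmu_cov c : (c < d)%nat -> dmu c = 2 * sumd d (fun a => xil a * cov c a).
Proof.
  intros Hc.
  set (S := sumd d (fun a => sumd d (fun b => xi x a * xi x b * dg x c a b))).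
  set (X := sumd d (fun a => xil a * dxi x c a)).
  assert (EX : sumd d (fun a => sumd d (fun b => g x a b * dxi x c b) * xi x a) = X).
  { transitivity (sumd d (fun a => sumd d (fun b => g x a b * dxi x c b * xi x a))).
    { apply sumd_ext; intros. rewrite sumd_mulr; auto. }
    apply sumd_swap_eq; intros b Hb. unfold xi_low. rewrite <- sumd_mulr.
    apply sumd_ext; intros. rewrite g_sym by auto. ring. }
  transitivity (S + 2 * X).
  - replace (S + 2 * X)
      with (S + sumd d (fun a => sumd d (fun b => g x a b * dxi x c b) * xi x a) + X)
      by (rewrite EX; ring).
    unfold dmu, S, X.
    rewrite <- !sumd_add. apply sumd_ext; intros a Ha. rewrite sumd_add.
    replace (sumd d (fun b => xi x a * xi x b * dg x c a b))
      with (sumd d (fun b => dg x c a b * xi x b) * xi x a)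
      by (rewrite <- sumd_mulr; apply sumd_ext; intros; ring).
    ring.
  - unfold cov_xi.
    transitivity (2 * (X + sumd d (fun a => xil a * sumd d (fun e => Gam d ginv dg x a c e * xi x e)))).
    + rewrite xi_low_Gam by auto. unfold S. lra.
    + f_equal. unfold X. rewrite <- sumd_add. apply sumd_ext; intros. ring.
Qed.

Lemma xi_low_xidot : sumd d (fun b => xil b * xdot b) = / 2 * mudot.
Proof.
  unfold xidot. rewrite <- sumd_mull.
  transitivity (sumd d (fun b => sumd d (fun a => xi x a * (xil b * cov a b)))).
  - apply sumd_ext; intros. rewrite <- sumd_mull. apply sumd_ext; intros. ring.
  - apply sumd_swap_eq; intros a Ha. rewrite dmu_cov, (sumd_mull d (xi x a)) by auto. field.
Qed.

Definition dginv (c a b : nat) : R :=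
  - sumd d (fun e => sumd d (fun f => ginv x a e * dg x c e f * ginv x f b)).

Lemma dginv_unique (L : nat -> nat -> R) c :
  (forall a e, (a < d)%nat -> (e < d)%nat ->
     sumd d (fun b => dg x c a b * ginv x b e + g x a b * L b e) = 0) ->
  forall a b, (a < d)%nat -> (b < d)%nat -> L a b = dginv c a b.
Proof.
  intros HL f e Hf He.
  rewrite <- (Gi_G_contract d (g x) (ginv x) g_sym g_ginv (fun b => L b e) f Hf).
  unfold dginv. rewrite <- sumd_opp. apply sumd_ext; intros a Ha.
  assert (E : sumd d (fun b => g x a b * L b e) = - sumd d (fun b => dg x c a b * ginv x b e)).
  { pose proof (HL a e Ha He) as Z. rewrite sumd_add in Z. lra. }
  rewrite E, <- Ropp_mult_distr_r, <- sumd_mull. f_equal. apply sumd_ext; intros. ring.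
Qed.

Lemma div_ginv b : (b < d)%nat ->
  sumd d (fun a => dginv a a b + sumd d (fun c =>
    Gam d ginv dg x a a c * ginv x c b + Gam d ginv dg x b a c * ginv x a c)) = 0.
Proof.
  intros Hb. rewrite <- (sumd_0 d). apply sumd_ext; intros a Ha.
  assert (E1 : dginv a a b =
    sumd d (fun e => sumd d (fun c => ginv x a e * ginv x c b * (- dg x a e c)))).
  { unfold dginv. rewrite <- sumd_opp. apply sumd_ext; intros.
    rewrite <- sumd_opp. apply sumd_ext; intros. ring. }
  assert (E2 : sumd d (fun c => Gam d ginv dg x a a c * ginv x c b) =
    sumd d (fun e => sumd d (fun c =>
      ginv x a e * ginv x c b * (/ 2 * (dg x a e c + dg x c e a - dg x e a c))))).
  { unfold Gam. symmetry. apply sumd_swap_eq; intros.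
    rewrite <- sumd_mull, <- sumd_mulr. apply sumd_ext; intros. ring. }
  assert (E3 : sumd d (fun c => Gam d ginv dg x b a c * ginv x a c) =
    sumd d (fun e => sumd d (fun c =>
      ginv x a e * ginv x c b * (/ 2 * (dg x a c e + dg x e c a - dg x c a e))))).
  { unfold Gam. apply sumd_ext; intros e He.
    rewrite <- sumd_mull, <- sumd_mulr. apply sumd_ext; intros c Hc.
    rewrite (ginv_sym b c) by auto. ring. }
  rewrite sumd_add, E1, E2, E3, <- !sumd_add, <- (sumd_0 d). apply sumd_ext; intros e He.
  rewrite <- !sumd_add, <- (sumd_0 d). apply sumd_ext; intros c Hc.
  rewrite (dg_sym a c e), (dg_sym e c a), (dg_sym c a e) by auto. field.
Qed.

Variables chi1 chi2 chi3 : R -> R. (* chi3 stands for chi_mumumu *)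

Definition dT0 (c a b : nat) : R :=
  4 * chi3 M * dmu c * xi x a * xi x b + 4 * chi2 M * (dxi x c a * xi x b + xi x a * dxi x c b)
  + 2 * chi2 M * dmu c * ginv x a b + 2 * chi1 M * dginv c a b.

Lemma div_T0 b : (b < d)%nat ->
  div2 d ginv dg (T0 d g ginv xi chi1 chi2) dT0 x b =
  4 * chi3 M * mudot * xi x b
  + 4 * chi2 M * (D * xi x b + xdot b)
  + 2 * chi2 M * grad_mu b.
Proof.
  intros Hb. unfold div2, T0, dT0.
  transitivity (sumd d (fun a =>
    4 * chi3 M * xi x b * (xi x a * dmu a) + 4 * chi2 M * xi x b * cov a a
    + 4 * chi2 M * (xi x a * cov a b) + 2 * chi2 M * (ginv x b a * dmu a)
    + 2 * chi1 M * (dginv a a b + sumd d (fun c =>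
        Gam d ginv dg x a a c * ginv x c b + Gam d ginv dg x b a c * ginv x a c)))).
  - apply sumd_ext; intros a Ha. unfold cov_xi.
    assert (E : sumd d (fun c =>
        Gam d ginv dg x a a c * (4 * chi2 M * xi x c * xi x b + 2 * chi1 M * ginv x c b) +
        Gam d ginv dg x b a c * (4 * chi2 M * xi x a * xi x c + 2 * chi1 M * ginv x a c)) =
      4 * chi2 M * xi x b * sumd d (fun c => Gam d ginv dg x a a c * xi x c) +
      4 * chi2 M * xi x a * sumd d (fun c => Gam d ginv dg x b a c * xi x c) +
      2 * chi1 M * sumd d (fun c =>
        Gam d ginv dg x a a c * ginv x c b + Gam d ginv dg x b a c * ginv x a c)).
    { rewrite <- !sumd_mull, <- !sumd_add. apply sumd_ext; intros. ring. }
    rewrite E, (ginv_sym b a) by auto. ring.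
  - rewrite !sumd_add, !sumd_mull, div_ginv by auto. unfold Dv, xidot. ring.
Qed.

Lemma S0_eq a : (a < d)%nat -> S0 d g ginv xi chi1 chi2 x a = - 4 * M * chi2 M * xi x a.
Proof.
  intros Ha. unfold S0, T0.
  transitivity (2 * chi1 M * xi x a - (4 * chi2 M * xi x a * sumd d (fun b => xil b * xi x b)
     + 2 * chi1 M * sumd d (fun b => xil b * ginv x b a))).
  - f_equal. rewrite <- !sumd_mull, <- sumd_add. apply sumd_ext; intros b Hb.
    rewrite (ginv_sym a b) by auto. ring.
  - rewrite xi_low_ginv by auto. unfold mu. ring.
Qed.

Definition dS0 (c a : nat) : R :=
  - 4 * ((chi2 M + M * chi3 M) * dmu c * xi x a + M * chi2 M * dxi x c a).

Lemma div_S0 :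
  div1 d ginv dg (S0 d g ginv xi chi1 chi2) dS0 x =
  - 4 * ((chi2 M + M * chi3 M) * mudot + M * chi2 M * D).
Proof.
  unfold div1, Dv, cov_xi.
  transitivity (sumd d (fun a => - 4 * ((chi2 M + M * chi3 M) * (xi x a * dmu a)
    + M * chi2 M * (dxi x a a + sumd d (fun c => Gam d ginv dg x a a c * xi x c))))).
  - apply sumd_ext; intros a Ha. unfold dS0.
    assert (E : sumd d (fun c => Gam d ginv dg x a a c * S0 d g ginv xi chi1 chi2 x c) =
                - 4 * M * chi2 M * sumd d (fun c => Gam d ginv dg x a a c * xi x c)).
    { rewrite <- sumd_mull. apply sumd_ext; intros c Hc. rewrite S0_eq by auto. ring. }
    rewrite E. ring.
  - rewrite sumd_mull, sumd_add, !sumd_mull. auto.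
Qed.

Lemma xi_low_grad_mu : sumd d (fun b => xil b * grad_mu b) = mudot.
Proof.
  rewrite sumd_mat_vec. apply sumd_ext; intros. rewrite xi_low_ginv; auto.
Qed.

Lemma mu_dot_of_xidot k :
  (forall b, (b < d)%nat -> xdot b = k * xi x b - / 2 * grad_mu b) ->
  mudot = k * M.
Proof.
  intros Hxd.
  assert (E : / 2 * mudot = k * M - / 2 * mudot).
  { rewrite <- xi_low_xidot at 1.
    transitivity (sumd d (fun b => k * (xil b * xi x b) - / 2 * (xil b * grad_mu b))).
    - apply sumd_ext; intros. rewrite Hxd by auto. ring.
    - rewrite sumd_sub, !sumd_mull, xi_low_grad_mu. auto. }
  lra.
Qed.

Lemma xidot_of_div_T0 : M <> 0 -> chi2 M <> 0 -> chi3 M = chi2 M * (chi0_exp d - 2) / M ->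
  (forall b, (b < d)%nat -> div2 d ginv dg (T0 d g ginv xi chi1 chi2) dT0 x b = 0) ->
  forall b, (b < d)%nat ->
  xdot b = - ((chi0_exp d - 2) * mudot / M + D) * xi x b - / 2 * grad_mu b.
Proof.
  intros HM H2 H3 Hdiv b Hb.
  assert (Z : 4 * chi2 M * (xdot b + ((chi0_exp d - 2) * mudot / M + D) * xi x b
                            + / 2 * grad_mu b) = 0).
  { rewrite <- (Hdiv b Hb), div_T0, H3 by auto. field. auto. }
  apply Rmult_integral in Z as [Z | Z]; lra.
Qed.

Lemma mu_dot_xidot_of_div_T0 : (3 <= d)%nat -> M <> 0 -> chi2 M <> 0 ->
  chi3 M = chi2 M * (chi0_exp d - 2) / M ->
  (forall b, (b < d)%nat -> div2 d ginv dg (T0 d g ginv xi chi1 chi2) dT0 x b = 0) ->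
  mudot / M = 2 * D / INR d /\
  forall b, (b < d)%nat -> xdot b = (mudot / M) * xi x b - / 2 * grad_mu b.
Proof.
  intros Hd HM H2 H3 Hdiv.
  assert (Hdn : 3 <= INR d) by (apply le_INR in Hd; simpl in Hd; lra).
  pose proof (xidot_of_div_T0 HM H2 H3 Hdiv) as Hxd.
  pose proof (mu_dot_of_xidot _ Hxd) as Emu.
  assert (E : mudot * INR d = 2 * D * M).
  { assert (E' : mudot = - (chi0_exp d - 2) * mudot - D * M) by (rewrite Emu at 1; field; auto).
    unfold chi0_exp in E'. lra. }
  assert (Ratio : mudot / M = 2 * D / INR d).
  { apply (Rmult_eq_reg_r (INR d * M)); [| apply Rmult_integral_contrapositive; split; lra].
    transitivity (mudot * INR d); [field; auto | rewrite E; field; lra]. }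
  split; auto. intros b Hb. rewrite Hxd, Ratio by auto. f_equal. f_equal.
  replace ((chi0_exp d - 2) * mudot / M) with ((chi0_exp d - 2) * (mudot / M)) by (field; auto).
  rewrite Ratio. unfold chi0_exp. field. lra.
Qed.

Lemma xi_contract_covl_l b : (b < d)%nat ->
  sumd d (fun a => xi x a * covl a b) = sumd d (fun c => g x b c * xdot c).
Proof.
  intros Hb. unfold cov_xi_low, xidot.
  transitivity (sumd d (fun a => sumd d (fun c => g x b c * (xi x a * cov a c)))).
  - apply sumd_ext; intros. rewrite <- sumd_mull. apply sumd_ext; intros. ring.
  - apply sumd_swap_eq; intros. rewrite sumd_mull. auto.
Qed.

Lemma xi_contract_covl_r b : (b < d)%nat -> sumd d (fun a => xi x a * covl b a) = / 2 * dmu b.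
Proof.
  intros Hb. rewrite dmu_cov by auto. unfold cov_xi_low.
  rewrite sumd_mat_vec.
  transitivity (sumd d (fun c => xil c * cov b c)); [| field].
  apply sumd_ext; intros c Hc. f_equal. unfold xi_low.
  apply sumd_ext; intros. rewrite g_sym by auto. ring.
Qed.

Lemma xi_contract_sym_cov k :
  (forall b, (b < d)%nat -> xdot b = k * xi x b - / 2 * grad_mu b) ->
  forall b, (b < d)%nat -> sumd d (fun a => xi x a * (/ 2 * (covl a b + covl b a))) = k / 2 * xil b.
Proof.
  intros Hxd b Hb.
  transitivity (/ 2 * (sumd d (fun a => xi x a * covl a b) + sumd d (fun a => xi x a * covl b a))).
  { rewrite <- sumd_add, <- sumd_mull. apply sumd_ext; intros. ring. }
  rewrite xi_contract_covl_l, xi_contract_covl_r by auto.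
  transitivity (/ 2 * (k * xil b - / 2 * sumd d (fun c => g x b c * grad_mu c) + / 2 * dmu b)).
  - f_equal. f_equal. unfold xi_low. rewrite <- sumd_mull, <- sumd_mull, <- sumd_sub.
    apply sumd_ext; intros. rewrite Hxd by auto. ring.
  - rewrite (G_Gi_contract d (g x) (ginv x) g_ginv dmu b Hb). field.
Qed.

Lemma trace_sym_cov : sumd d (fun a => sumd d (fun b => ginv x a b * (/ 2 * (covl a b + covl b a)))) = D.
Proof.
  assert (Tr : forall a, (a < d)%nat -> sumd d (fun b => ginv x a b * covl a b) = cov a a).
  { intros a Ha. exact (Gi_G_contract d (g x) (ginv x) g_sym g_ginv _ a Ha). }
  assert (Swap : sumd d (fun a => sumd d (fun b => ginv x a b * covl b a)) =
                 sumd d (fun a => sumd d (fun b => ginv x a b * covl a b))).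
  { apply sumd_swap_eq; intros a Ha. apply sumd_ext; intros. rewrite ginv_sym by auto. auto. }
  transitivity (/ 2 * (sumd d (fun a => sumd d (fun b => ginv x a b * covl a b))
                       + sumd d (fun a => sumd d (fun b => ginv x a b * covl b a)))).
  - rewrite <- sumd_add, <- sumd_mull. apply sumd_ext; intros a Ha.
    rewrite <- sumd_add, <- sumd_mull. apply sumd_ext; intros. ring.
  - rewrite Swap, (sumd_ext _ _ _ Tr). unfold Dv. field.
Qed.

Lemma conformal_of_xidot t s : (2 <= d)%nat -> M <> 0 ->
  (forall b, (b < d)%nat -> xdot b = 2 * D / INR d * xi x b - / 2 * grad_mu b) ->
  (forall a b, (a < d)%nat -> (b < d)%nat ->
     / 2 * (covl a b + covl b a) = t * g x a b + s * xil a * xil b) ->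
  s = 0 /\ t = D / INR d.
Proof.
  intros Hd HM Hxd HK.
  assert (Hdn : 2 <= INR d) by (apply le_INR in Hd; simpl in Hd; lra).
  assert (Contract : t + s * M = D / INR d).
  { destruct (sumd_neq0 d (fun b => xil b * xi x b) HM) as [b [Hb Hnz]].
    assert (Hxl : xil b <> 0) by (intro E; apply Hnz; rewrite E; ring).
    apply (Rmult_eq_reg_r (xil b)); auto.
    transitivity (2 * D / INR d / 2 * xil b); [| field; lra].
    rewrite <- (xi_contract_sym_cov _ Hxd b Hb). symmetry.
    transitivity (sumd d (fun a => t * (g x b a * xi x a) + s * xil b * (xil a * xi x a))).
    - apply sumd_ext; intros a Ha. rewrite HK, (g_sym a b) by auto. ring.
    - rewrite sumd_add, !sumd_mull.
      change (sumd d (fun a => g x b a * xi x a)) with (xil b). unfold mu. ring. }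
  assert (Trace : t * INR d + s * M = D).
  { rewrite <- trace_sym_cov, <- sumd_kdelta_diag. unfold mu.
    rewrite <- !sumd_mull, <- sumd_add. apply sumd_ext; intros a Ha.
    rewrite <- (xi_low_ginv a Ha), <- !sumd_mull, <- (Gi_G d (g x) (ginv x) g_sym g_ginv a a Ha Ha),
      <- !sumd_mull, <- sumd_add.
    apply sumd_ext; intros b Hb. rewrite HK, (ginv_sym a b), (g_sym a b) by auto. ring. }
  assert (Ht : t = D / INR d).
  { apply (Rmult_eq_reg_r (INR d - 1)); [| lra].
    replace (D / INR d * (INR d - 1)) with (D - D / INR d) by (field; lra). lra. }
  split; auto. rewrite Ht in Contract.
  assert (Hs : s * M = 0) by lra.
  apply Rmult_integral in Hs as [Hs | Hs]; [auto | contradiction].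
Qed.

End PointwiseCalculus.

Section Spacetime.

Variables (d : nat) (U : pt -> Prop) (g ginv : pt -> nat -> nat -> R)
  (dg : pt -> nat -> nat -> nat -> R) (xi : pt -> nat -> R) (dxi : pt -> nat -> nat -> R).

Hypothesis st : spacetime d U g ginv dg.
Hypothesis vf : vector_field d U xi dxi.

Lemma spacetime_g_sym x : U x -> forall a b, (a < d)%nat -> (b < d)%nat -> g x a b = g x b a.
Proof. intros Hx. apply (proj2 st x Hx). Qed.

Lemma spacetime_g_ginv x : U x -> forall a c, (a < d)%nat -> (c < d)%nat ->
  sumd d (fun b => g x a b * ginv x b c) = kdelta a c.
Proof. intros Hx. apply (proj2 st x Hx). Qed.

Lemma spacetime_has_pd_g x : U x -> forall a b c, (a < d)%nat -> (b < d)%nat -> (c < d)%nat ->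
  has_pd (fun y => g y a b) c x (dg x c a b).
Proof. intros Hx. apply (proj2 st x Hx). Qed.

Lemma spacetime_dg_sym x : U x -> forall c a b, (c < d)%nat -> (a < d)%nat -> (b < d)%nat ->
  dg x c a b = dg x c b a.
Proof.
  intros Hx c a b Hc Ha Hb.
  destruct (open_set_upd d U x c (proj1 st) Hx) as [eps [He Heps]].
  apply (has_pd_unique (fun y => g y a b) c x); [apply spacetime_has_pd_g; auto |].
  apply (has_pd_local _ (fun y => g y b a) c x _ eps He); [| apply spacetime_has_pd_g; auto].
  intros h Hh. apply spacetime_g_sym; auto.
Qed.

Lemma has_pd_mu x c : U x -> (c < d)%nat -> has_pd (mu d g xi) c x (dmu d g dg xi dxi x c).
Proof.
  intros Hx Hc. apply (has_pd_sumd d (fun y a => xi_low d g xi y a * xi y a)); intros a Ha.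
  apply (has_pd_mult (fun y => xi_low d g xi y a)); [| apply vf; auto].
  apply (has_pd_sumd d (fun y b => g y a b * xi y b)); intros b Hb.
  apply (has_pd_mult (fun y => g y a b)); [apply spacetime_has_pd_g | apply vf]; auto.
Qed.

Lemma has_pd_ginv_unique x (L : nat -> nat -> nat -> R) : U x ->
  (forall c a b, (c < d)%nat -> (a < d)%nat -> (b < d)%nat ->
     has_pd (fun y => ginv y a b) c x (L c a b)) ->
  forall c a b, (c < d)%nat -> (a < d)%nat -> (b < d)%nat -> L c a b = dginv d ginv dg x c a b.
Proof.
  intros Hx HL c a b Hc. revert a b.
  apply (dginv_unique d g ginv dg x (spacetime_g_sym x Hx) (spacetime_g_ginv x Hx) (L c) c).
  intros a e Ha He. destruct (open_set_upd d U x c (proj1 st) Hx) as [eps [Hep Heps]].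
  apply (has_pd_unique (fun y => sumd d (fun b => g y a b * ginv y b e)) c x).
  - apply (has_pd_sumd d (fun y b => g y a b * ginv y b e)); intros b Hb.
    apply (has_pd_mult (fun y => g y a b)); [apply spacetime_has_pd_g | apply HL]; auto.
  - apply (has_pd_local _ (fun _ => kdelta a e) c x _ eps Hep); [| apply has_pd_const].
    intros h Hh. apply spacetime_g_ginv; auto.
Qed.

Variables (c0 : R) (chi1 chi2 : R -> R).
Hypothesis chi1_deriv : forall m, m < 0 -> derivable_pt_lim (chi0 d c0) m (chi1 m).
Hypothesis chi2_deriv : forall m, m < 0 -> derivable_pt_lim chi1 m (chi2 m).
Hypothesis d_ge3 : (3 <= d)%nat.
Hypothesis c0_neq0 : c0 <> 0.
Hypothesis timelike : forall x, U x -> mu d g xi x < 0.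

Local Notation chi3 := (fun m => chi2 m * (chi0_exp d - 2) / m).

Lemma has_pd_chi1_mu x c : U x -> (c < d)%nat ->
  has_pd (fun y => chi1 (mu d g xi y)) c x (chi2 (mu d g xi x) * dmu d g dg xi dxi x c).
Proof. intros Hx Hc. apply has_pd_comp; [apply has_pd_mu | apply chi2_deriv, timelike]; auto. Qed.

Lemma has_pd_chi2_mu x c : U x -> (c < d)%nat ->
  has_pd (fun y => chi2 (mu d g xi y)) c x (chi3 (mu d g xi x) * dmu d g dg xi dxi x c).
Proof.
  intros Hx Hc. apply has_pd_comp; [apply has_pd_mu | apply (derivable_chi2 d c0 chi1), timelike]; auto.
Qed.

Lemma has_pd_T0_xi_xi x c a b : U x -> (c < d)%nat -> (a < d)%nat -> (b < d)%nat ->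
  has_pd (fun y => 4 * chi2 (mu d g xi y) * xi y a * xi y b) c x
    (4 * chi3 (mu d g xi x) * dmu d g dg xi dxi x c * xi x a * xi x b
     + 4 * chi2 (mu d g xi x) * (dxi x c a * xi x b + xi x a * dxi x c b)).
Proof.
  intros Hx Hc Ha Hb. eapply has_pd_eq.
  - apply has_pd_mult; [apply has_pd_mult; [apply has_pd_mult |] |];
      [apply has_pd_const | apply has_pd_chi2_mu | apply vf | apply vf]; auto.
  - cbv beta. ring.
Qed.

Lemma has_pd_ginv_of_T0 x (dT : nat -> nat -> nat -> R) : U x ->
  (forall a b c, (a < d)%nat -> (b < d)%nat -> (c < d)%nat ->
     has_pd (fun y => T0 d g ginv xi chi1 chi2 y a b) c x (dT c a b)) ->
  forall c a b, (c < d)%nat -> (a < d)%nat -> (b < d)%nat ->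
  has_pd (fun y => ginv y a b) c x (dginv d ginv dg x c a b).
Proof.
  intros Hx HdT.
  set (M := mu d g xi x).
  assert (HB : chi1 M <> 0) by (apply (chi1_neq0 d c0 chi1), timelike; auto).
  set (L := fun c a b => (dT c a b - 4 * chi3 M * dmu d g dg xi dxi x c * xi x a * xi x b
      - 4 * chi2 M * (dxi x c a * xi x b + xi x a * dxi x c b)
      - 2 * chi2 M * dmu d g dg xi dxi x c * ginv x a b) / (2 * chi1 M)).
  assert (HL : forall c a b, (c < d)%nat -> (a < d)%nat -> (b < d)%nat ->
                 has_pd (fun y => ginv y a b) c x (L c a b)).
  { intros c a b Hc Ha Hb. destruct (open_set_upd d U x c (proj1 st) Hx) as [eps [He Heps]].
    apply (has_pd_local _ (fun y => (T0 d g ginv xi chi1 chi2 y a b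
             - 4 * chi2 (mu d g xi y) * xi y a * xi y b) / (2 * chi1 (mu d g xi y))) c x _ eps He).
    - intros h Hh.
      pose proof (chi1_neq0 d c0 chi1 chi1_deriv d_ge3 c0_neq0 _ (timelike _ (Heps h Hh))).
      unfold T0. field. auto.
    - eapply has_pd_eq.
      + apply has_pd_div; [apply has_pd_minus; [apply HdT | apply has_pd_T0_xi_xi] | | ]; auto.
        apply has_pd_mult; [apply has_pd_const | apply has_pd_chi1_mu]; auto.
      + unfold L, T0, Rsqr. fold M. field. split; auto. apply Rlt_not_eq, timelike; auto. }
  intros c a b Hc Ha Hb. rewrite <- (has_pd_ginv_unique x L); auto.
Qed.

Lemma dT_eq x (dT : nat -> nat -> nat -> R) : U x ->
  (forall a b c, (a < d)%nat -> (b < d)%nat -> (c < d)%nat ->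
     has_pd (fun y => T0 d g ginv xi chi1 chi2 y a b) c x (dT c a b)) ->
  forall c a b, (c < d)%nat -> (a < d)%nat -> (b < d)%nat ->
  dT c a b = dT0 d g ginv dg xi dxi x chi1 chi2 chi3 c a b.
Proof.
  intros Hx HdT c a b Hc Ha Hb.
  apply (has_pd_unique (fun y => T0 d g ginv xi chi1 chi2 y a b) c x); [apply HdT; auto |].
  unfold T0. eapply has_pd_eq.
  - apply has_pd_plus; [apply has_pd_T0_xi_xi; auto |].
    apply has_pd_mult; [apply has_pd_mult; [apply has_pd_const | apply has_pd_chi1_mu; auto] |].
    apply (has_pd_ginv_of_T0 x dT); auto.
  - unfold dT0. cbv beta. ring.
Qed.

Hypothesis T0_conserved : forall x, U x -> exists dT : nat -> nat -> nat -> R,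
  (forall a b c, (a < d)%nat -> (b < d)%nat -> (c < d)%nat ->
     has_pd (fun y => T0 d g ginv xi chi1 chi2 y a b) c x (dT c a b)) /\
  (forall b, (b < d)%nat -> div2 d ginv dg (T0 d g ginv xi chi1 chi2) dT x b = 0).

Lemma div_T0_eq0 x : U x -> forall b, (b < d)%nat ->
  div2 d ginv dg (T0 d g ginv xi chi1 chi2) (dT0 d g ginv dg xi dxi x chi1 chi2 chi3) x b = 0.
Proof.
  intros Hx b Hb. destruct (T0_conserved x Hx) as [dT [HdT Hdiv]].
  rewrite <- (Hdiv b Hb). unfold div2. apply sumd_ext; intros a Ha.
  rewrite (dT_eq x dT) by auto. auto.
Qed.

Lemma mu_dot_xidot x : U x ->
  let mudot := sumd d (fun a => xi x a * dmu d g dg xi dxi x a) in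
  mudot / mu d g xi x = 2 * Dv d ginv dg xi dxi x / INR d /\
  forall b, (b < d)%nat ->
    xidot d ginv dg xi dxi x b =
    (mudot / mu d g xi x) * xi x b - / 2 * sumd d (fun c => ginv x b c * dmu d g dg xi dxi x c).
Proof.
  intros Hx. pose proof (timelike x Hx).
  apply (mu_dot_xidot_of_div_T0 d g ginv dg xi dxi x (spacetime_g_sym x Hx) (spacetime_g_ginv x Hx)
           (spacetime_dg_sym x Hx) chi1 chi2 chi3); auto.
  - lra.
  - apply (chi2_neq0 d c0 chi1); auto.
  - apply div_T0_eq0; auto.
Qed.

Lemma conserved_T0_mu_dot_xidot x : U x -> exists dm : nat -> R,
  (forall c, (c < d)%nat -> has_pd (mu d g xi) c x (dm c)) /\
  (let mudot := sumd d (fun a => xi x a * dm a) in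
   mudot / mu d g xi x = 2 * Dv d ginv dg xi dxi x / INR d /\
   forall b, (b < d)%nat ->
     xidot d ginv dg xi dxi x b =
     (mudot / mu d g xi x) * xi x b - / 2 * sumd d (fun c => ginv x b c * dm c)).
Proof.
  intros Hx. exists (dmu d g dg xi dxi x). split.
  - intros c Hc. apply has_pd_mu; auto.
  - apply mu_dot_xidot; auto.
Qed.

Lemma conserved_T0_S0 x : U x ->
  (forall a, (a < d)%nat ->
     S0 d g ginv xi chi1 chi2 x a = - 4 * mu d g xi x * chi2 (mu d g xi x) * xi x a) /\
  exists dS : nat -> nat -> R,
    (forall a c, (a < d)%nat -> (c < d)%nat ->
       has_pd (fun y => S0 d g ginv xi chi1 chi2 y a) c x (dS c a)) /\
    div1 d ginv dg (S0 d g ginv xi chi1 chi2) dS x = 0.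
Proof.
  intros Hx. split; [apply S0_eq; [apply spacetime_g_sym | apply spacetime_g_ginv]; auto |].
  exists (dS0 d g dg xi dxi x chi2 chi3). split.
  - intros a c Ha Hc. destruct (open_set_upd d U x c (proj1 st) Hx) as [eps [He Heps]].
    apply (has_pd_local _ (fun y => - 4 * mu d g xi y * chi2 (mu d g xi y) * xi y a) c x _ eps He).
    + intros h Hh. apply S0_eq; [apply spacetime_g_sym | apply spacetime_g_ginv | ]; auto.
    + eapply has_pd_eq.
      * apply has_pd_mult; [apply has_pd_mult; [apply has_pd_mult |] |];
          [apply has_pd_const | apply has_pd_mu | apply has_pd_chi2_mu | apply vf]; auto.
      * unfold dS0. cbv beta. ring.
  - rewrite (div_S0 d g ginv dg xi dxi x (spacetime_g_sym x Hx) (spacetime_g_ginv x Hx)).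
    destruct (mu_dot_xidot x Hx) as [Ratio _].
    pose proof (timelike x Hx).
    assert (Hdn : 3 <= INR d) by (apply le_INR in d_ge3; simpl in d_ge3; lra).
    replace (sumd d (fun a => xi x a * dmu d g dg xi dxi x a))
      with (2 * Dv d ginv dg xi dxi x / INR d * mu d g xi x) by (rewrite <- Ratio; field; lra).
    unfold chi0_exp. field. lra.
Qed.

Lemma conserved_T0_conformal_Killing (t s : pt -> R) :
  (forall x, U x -> forall a b, (a < d)%nat -> (b < d)%nat ->
     / 2 * (cov_xi_low d g ginv dg xi dxi x a b + cov_xi_low d g ginv dg xi dxi x b a)
     = t x * g x a b + s x * xi_low d g xi x a * xi_low d g xi x b) ->
  forall x, U x ->
    s x = 0 /\ t x = Dv d ginv dg xi dxi x / INR d /\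
    (forall a b, (a < d)%nat -> (b < d)%nat ->
       / 2 * (cov_xi_low d g ginv dg xi dxi x a b + cov_xi_low d g ginv dg xi dxi x b a)
       = Dv d ginv dg xi dxi x / INR d * g x a b).
Proof.
  intros HK x Hx. pose proof (timelike x Hx).
  destruct (mu_dot_xidot x Hx) as [Ratio Hxd].
  destruct (conformal_of_xidot d g ginv dg xi dxi x (spacetime_g_sym x Hx) (spacetime_g_ginv x Hx)
              (spacetime_dg_sym x Hx) (t x) (s x)) as [Hs Ht]; auto.
  - lia.
  - lra.
  - intros b Hb. rewrite Hxd, Ratio by auto. auto.
  - repeat split; auto. intros a b Ha Hb. rewrite HK, Hs, Ht by auto. ring.
Qed.
End Spacetime.

Theorem mainTheorem5 (d : nat) (c0 : R) (chi1 chi2 : R -> R) (U : pt -> Prop)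
    (g ginv : pt -> nat -> nat -> R) (dg : pt -> nat -> nat -> nat -> R)
    (xi : pt -> nat -> R) (dxi : pt -> nat -> nat -> R) :
  (3 <= d)%nat ->
  c0 <> 0 ->
  (forall m, m < 0 -> derivable_pt_lim (chi0 d c0) m (chi1 m)) ->
  (forall m, m < 0 -> derivable_pt_lim chi1 m (chi2 m)) ->
  spacetime d U g ginv dg ->
  vector_field d U xi dxi ->
  (forall x, U x -> mu d g xi x < 0) ->
  (forall x, U x -> exists dT : nat -> nat -> nat -> R,
      (forall a b c, (a < d)%nat -> (b < d)%nat -> (c < d)%nat ->
         has_pd (fun y => T0 d g ginv xi chi1 chi2 y a b) c x (dT c a b)) /\
      (forall b, (b < d)%nat -> div2 d ginv dg (T0 d g ginv xi chi1 chi2) dT x b = 0)) ->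
  (forall x, U x -> exists dmu : nat -> R,
      (forall c, (c < d)%nat -> has_pd (mu d g xi) c x (dmu c)) /\
      (let mudot := sumd d (fun a => xi x a * dmu a) in
       mudot / mu d g xi x = 2 * Dv d ginv dg xi dxi x / INR d /\
       forall b, (b < d)%nat ->
         xidot d ginv dg xi dxi x b =
         (mudot / mu d g xi x) * xi x b - / 2 * sumd d (fun c => ginv x b c * dmu c))) /\
  (forall x, U x ->
      (forall a, (a < d)%nat ->
         S0 d g ginv xi chi1 chi2 x a = - 4 * mu d g xi x * chi2 (mu d g xi x) * xi x a) /\
      exists dS : nat -> nat -> R,
        (forall a c, (a < d)%nat -> (c < d)%nat ->
           has_pd (fun y => S0 d g ginv xi chi1 chi2 y a) c x (dS c a)) /\
        div1 d ginv dg (S0 d g ginv xi chi1 chi2) dS x = 0) /\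
  (forall t s : pt -> R,
      (forall x, U x -> forall a b, (a < d)%nat -> (b < d)%nat ->
         / 2 * (cov_xi_low d g ginv dg xi dxi x a b + cov_xi_low d g ginv dg xi dxi x b a)
         = t x * g x a b + s x * xi_low d g xi x a * xi_low d g xi x b) ->
      forall x, U x ->
        s x = 0 /\ t x = Dv d ginv dg xi dxi x / INR d /\
        (forall a b, (a < d)%nat -> (b < d)%nat ->
           / 2 * (cov_xi_low d g ginv dg xi dxi x a b + cov_xi_low d g ginv dg xi dxi x b a)
           = Dv d ginv dg xi dxi x / INR d * g x a b)).
Proof.
  intros Hd Hc0 H1 H2 Hst Hvf Htl Hcons.
  split; [| split].
  - exact (conserved_T0_mu_dot_xidot d U g ginv dg xi dxi Hst Hvf c0 chi1 chi2 H1 H2 Hd Hc0 Htl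
             Hcons).
  - exact (conserved_T0_S0 d U g ginv dg xi dxi Hst Hvf c0 chi1 chi2 H1 H2 Hd Hc0 Htl Hcons).
  - exact (conserved_T0_conformal_Killing d U g ginv dg xi dxi Hst Hvf c0 chi1 chi2 H1 H2 Hd Hc0 Htl
             Hcons).
Qed.
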